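(* Let $r\ge5$, let $T$ be a $K_r$-tree, let $G$ be a graph, and let $S=V(G)\cap V(T)$. Then, for any run of the $(r-2)_*$-BP process on $T$ with seed set $S$, every copy $\tilde H$ of $K_r$ that is completed by the $K_r$-dynamics started from $G\cup T$ satisfies $V(\tilde H)\subseteq V(G)\cup\langle S;T\rangle_*$.
   Context: A graph $T$ is a $K_r$-tree if it is the union of copies $H_1,\dots,H_\vartheta$ of $K_r$ such that for each $1<i\le\vartheta$, $H_i$ shares exactly one edge with $H_1\cup\cdots\cup H_{i-1}$ (the common vertices being exactly the two endpoints of that edge). An edge of $T$ is internal if it lies in at least two of the $H_i$. The $(r-2)_*$-bootstrap percolation process on $T$ with seed set $S\subseteq V(T)$: initially the vertices of $S$ are infected; in each step, either (usual step) some uninfected vertex with at least $r-2$ infected neighbors in $T$ becomes infected; or else (special step), if no usual step is possible but for some internal edge $f$ there are two copies $H_i\ne H_j$ containing $f$ such that $H_i$ has $r-4$ infected vertices and $H_j$ has $1$ infected vertex, all these $r-3$ vertices not in $f$, then an arbitrarily chosen vertex $u\in f$ becomes infected; otherwise the process terminates. $\langle S;T\rangle_*$ is the set of eventually infected vertices. The $K_r$-dynamics on a graph repeatedly adds an edge $e$ whenever there is a copy of $K_r$ in which $e$ is the only missing edge; such a copy is said to be completed by the dynamics (when $e$ is added). *)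

(* Graphs on an ambient finite vertex type V:
   a graph is a vertex set W : {set V} and an edge set E : {set {set V}}
   of 2-element subsets of W. *)
From mathcomp Require Import all_boot.
Set Implicit Arguments. Unset Strict Implicit. Unset Printing Implicit Defensive.

Section Defs.
Variable V : finType.

Definition pairs_in (X : {set V}) : {set {set V}} :=
  [set e : {set V} | (#|e| == 2) && (e \subset X)].

Definition is_graph (W : {set V}) (E : {set {set V}}) : Prop :=
  forall e, e \in E -> #|e| = 2 /\ e \subset W.

(* A K_r-tree given by its copies H_1, ..., H_theta (vertex sets of the copies of K_r). *)
Definition Kr_tree (r : nat) (Hs : seq {set V}) : Prop :=
  0 < size Hs /\
  (forall i, i < size Hs -> #|nth set0 Hs i| = r) /\
  (forall i, 0 < i < size Hs ->
     exists e, e \in pairs_in (nth set0 Hs i) /\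
       (exists j, j < i /\ e \subset nth set0 Hs j) /\
       nth set0 Hs i :&: (\bigcup_(K <- take i Hs) K) = e).

Definition Tverts (Hs : seq {set V}) : {set V} := \bigcup_(H <- Hs) H.
Definition Tedges (Hs : seq {set V}) : {set {set V}} :=
  [set e : {set V} | (#|e| == 2) && has (fun H : {set V} => e \subset H) Hs].

Definition internal_edge (Hs : seq {set V}) (f : {set V}) : Prop :=
  f \in Tedges Hs /\
  exists i j, [/\ i < size Hs, j < size Hs, i <> j,
                  f \subset nth set0 Hs i & f \subset nth set0 Hs j].

Definition bp_usual (r : nat) (Hs : seq {set V}) (A : {set V}) (v : V) : Prop :=
  [/\ v \in Tverts Hs, v \notin A &
      r - 2 <= #|[set w in A | [set v; w] \in Tedges Hs]| ].

(* special step (its precondition that no usual step is possible is added in bp_step) *)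
Definition bp_special (r : nat) (Hs : seq {set V}) (A : {set V}) (u : V) : Prop :=
  exists f i j,
    internal_edge Hs f /\ i < size Hs /\ j < size Hs /\ i <> j /\
    f \subset nth set0 Hs i /\ f \subset nth set0 Hs j /\
    #|nth set0 Hs i :&: A| = r - 4 /\ #|nth set0 Hs j :&: A| = 1 /\
    [disjoint (nth set0 Hs i :&: A) :|: (nth set0 Hs j :&: A) & f] /\ u \in f.

Definition bp_step (r : nat) (Hs : seq {set V}) (A : {set V}) (v : V) : Prop :=
  bp_usual r Hs A v \/
  ((~ exists w, bp_usual r Hs A w) /\ bp_special r Hs A v).

Fixpoint bp_path (r : nat) (Hs : seq {set V}) (A : {set V}) (vs : seq V) : Prop :=
  match vs with
  | [::] => True
  | v :: vs' => bp_step r Hs A v /\ bp_path r Hs (v |: A) vs'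
  end.

(* A is the final infected set <S;T>_* of some (terminated) run of the process *)
Definition bp_run (r : nat) (Hs : seq {set V}) (S A : {set V}) : Prop :=
  exists vs, [/\ bp_path r Hs S vs, A = S :|: [set x in vs] &
                 ~ exists v, bp_step r Hs A v].

Definition dyn_completes (r : nat) (W : {set V}) (E : {set {set V}})
    (e X : {set V}) : Prop :=
  [/\ X \subset W, #|X| = r, e \in pairs_in X, e \notin E &
      forall f, f \in pairs_in X -> f != e -> f \in E].

Definition dyn_step (r : nat) (W : {set V}) (E : {set {set V}}) (e : {set V}) : Prop :=
  exists X, dyn_completes r W E e X.

Fixpoint dyn_path (r : nat) (W : {set V}) (E : {set {set V}}) (es : seq {set V}) : Prop :=
  match es with
  | [::] => True
  | e :: es' => dyn_step r W E e /\ dyn_path r W (e |: E) es'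
  end.

Definition completed_copy (r : nat) (W : {set V}) (E0 : {set {set V}}) (X : {set V}) : Prop :=
  exists es e, dyn_path r W E0 es /\ dyn_completes r W (E0 :|: [set x in es]) e X.

End Defs.

(* Put B = V(G) ∪ <S;T>_*.  By induction along the dynamics, every added edge lies inside
   B, so it suffices to show that a copy X completed by adding the edge ab lies in B.  A
   vertex of X outside B is an uninfected vertex of T, so all its pairs in X other than ab
   are edges of T, and, as the process has terminated, it has at most r - 3 infected
   T-neighbours, among them all of X ∩ B.  On the other hand K_r-trees are rigid: a T-clique
   on three or more vertices lies in a single copy, two copies share at most two vertices,
   and every 4-cycle of T has a chord.  In particular two vertices joined in T to a common
   triangle are joined in T.  Counting then leaves only configurations in which a and b are
   forced to be adjacent in T, impossible since ab was missing, or in which a special step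
   is still available, impossible since the process has terminated. *)

From mathcomp Require Import all_boot zify.
Set Implicit Arguments. Unset Strict Implicit. Unset Printing Implicit Defensive.

Lemma card_set4_le (T : finType) (x1 x2 x3 x4 : T) : #|[set x1; x2; x3; x4]| <= 4.
Proof.
apply: leq_trans (card_size [:: x1; x2; x3; x4]); apply/subset_leq_card/subsetP => u.
by rewrite !inE -!orbA.
Qed.

Section KrTree.
Variables (V : finType) (r : nat) (Hs : seq {set V}).
Hypothesis tree : Kr_tree r Hs.

Local Notation H i := (nth set0 Hs i).
Local Notation tadj u v := ([set u; v] \in Tedges Hs).

Definition prefix_verts k : {set V} := \bigcup_(K <- take k Hs) K.

Definition prefix_adj k (u v : V) :=
  (u != v) && has (fun K : {set V} => [set u; v] \subset K) (take k Hs).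

Definition Tclique (K : {set V}) := {in K &, forall u v, u != v -> tadj u v}.

Lemma mem_nth_take j k : j < k -> j < size Hs -> H j \in take k Hs.
Proof.
by move=> jk js; rewrite -(nth_take set0 jk) mem_nth // size_take_min leq_min jk.
Qed.

Lemma sub_prefix_verts j k : j < k -> j < size Hs -> H j \subset prefix_verts k.
Proof. by move=> jk js; rewrite /prefix_verts bigcup_seq bigcup_sup ?mem_nth_take. Qed.

Lemma prefix_verts0 : prefix_verts 0 = set0.
Proof. by rewrite /prefix_verts take0 big_nil. Qed.

Lemma prefix_adj_sym k u v : prefix_adj k u v = prefix_adj k v u.
Proof. by rewrite /prefix_adj eq_sym setUC. Qed.

Lemma prefix_adjS k u v : k < size Hs ->
  prefix_adj k.+1 u v = prefix_adj k u v || (u != v) && ([set u; v] \subset H k).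
Proof.
by move=> ks; rewrite /prefix_adj (take_nth set0 ks) has_rcons; case: (u != v); rewrite // orbC.
Qed.

Lemma prefix_adj_verts k u v : prefix_adj k u v -> u \in prefix_verts k.
Proof.
case/andP => _ /hasP [K Kk /subsetP uvK]; rewrite /prefix_verts bigcup_seq.
by apply/bigcupP; exists K; rewrite // uvK // !inE eqxx.
Qed.

Lemma prefix_adj_copy j k u v : j < k -> j < size Hs ->
  u \in H j -> v \in H j -> u != v -> prefix_adj k u v.
Proof.
move=> jk js uj vj uv; rewrite /prefix_adj uv; apply/hasP; exists (H j).
  exact: mem_nth_take.
by apply/subsetP => w; rewrite !inE => /orP [] /eqP ->.
Qed.

Lemma tree_meet_sub k : 0 < k < size Hs ->
  exists2 j, j < k & H k :&: prefix_verts k \subset H j.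
Proof.
case: tree => _ [_ trk] hk; have [e [_ [[j [jk ej]] meet]]] := trk k hk.
by exists j; rewrite // /prefix_verts meet.
Qed.

Lemma card_tree_meet k : 0 < k < size Hs -> #|H k :&: prefix_verts k| = 2.
Proof.
case: tree => _ [_ trk] hk; have [e [eP [_ meet]]] := trk k hk.
by move: eP; rewrite /prefix_verts meet inE => /andP [/eqP].
Qed.

Lemma card_copyI i j : i < size Hs -> j < size Hs -> i != j -> #|H i :&: H j| <= 2.
Proof.
wlog ji : i j / j < i.
  move=> hw iS jS ij; case: (ltngtP i j) => [lt|lt|eq].
  - by rewrite setIC hw // eq_sym.
  - exact: hw.
  - by rewrite eq eqxx in ij.
move=> iS jS _; have i0 : 0 < i by case: i ji {iS}.
by rewrite -(card_tree_meet (k := i)) ?i0 // subset_leq_card // setIS // sub_prefix_verts.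
Qed.

Lemma prefix_adj_new k u v : k < size Hs -> u \notin prefix_verts k ->
  prefix_adj k.+1 u v -> [set u; v] \subset H k.
Proof.
move=> ks uk; rewrite prefix_adjS // => /orP [/prefix_adj_verts uk' | /andP [_ //]].
by rewrite uk' in uk.
Qed.

(* An edge of the [k]-th copy between two old vertices lies in the edge it shares with the
   earlier copies, hence was already present. *)
Lemma prefix_adj_old k u v : k < size Hs -> u \in prefix_verts k -> v \in prefix_verts k ->
  prefix_adj k.+1 u v -> prefix_adj k u v.
Proof.
move=> ks uk vk; rewrite prefix_adjS // => /orP [// | /andP [uv uvH]].
have k0 : 0 < k by case: k ks uk {vk uvH} => //; rewrite prefix_verts0 inE.
have [j jk /subsetP meet] := tree_meet_sub (introT andP (conj k0 ks)).
have inH w : w \in [set u; v] -> w \in H j.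
  by move=> w_uv; apply: meet; rewrite inE (subsetP uvH) //; case/set2P: w_uv => ->.
by apply: (prefix_adj_copy jk (ltn_trans jk ks)) => //; apply: inH; rewrite !inE eqxx ?orbT.
Qed.

Lemma prefix_clique_sub_copy k (K : {set V}) : k <= size Hs -> 2 < #|K| ->
  {in K &, forall u v, u != v -> prefix_adj k u v} -> exists2 i, i < k & K \subset H i.
Proof.
elim: k => [|k IH] ks cK adjK; case/card_gt2P: (cK) => x [y [_ [[xK yK _] [xy _ _]]]].
  by move: (adjK x y xK yK xy); rewrite /prefix_adj take0 andbF.
have partner v : v \in K -> exists2 w, w \in K & v != w.
  by move=> vK; case: (eqVneq v x) => [-> | vx]; [exists y | exists x].
case: (boolP [exists v in K, v \notin prefix_verts k]).
  move=> /exists_inP [v vK vk].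
  have vH w : w \in K -> v != w -> [set v; w] \subset H k.
    by move=> wK vw; apply: prefix_adj_new vk (adjK v w vK wK vw).
  exists k => //; apply/subsetP => w wK; case: (eqVneq v w) => [<- | vw].
    by have [w' w'K vw'] := partner v vK; apply: (subsetP (vH w' w'K vw')); rewrite !inE eqxx.
  by apply: (subsetP (vH w wK vw)); rewrite !inE eqxx orbT.
move=> /exists_inPn oldK.
have oldK' v : v \in K -> v \in prefix_verts k by move=> /oldK; rewrite negbK.
have [i ik Ki] : exists2 i, i < k & K \subset H i.
  apply: IH => [|//|u v uK vK uv]; first exact: ltnW.
  by apply: prefix_adj_old; rewrite ?oldK' //; apply: adjK.
by exists i => //; apply: ltnW.
Qed.

Lemma prefix_adj_new_chord k v x y : k < size Hs -> v \notin prefix_verts k ->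
  prefix_adj k.+1 v x -> prefix_adj k.+1 v y -> x != y -> prefix_adj k.+1 x y.
Proof.
move=> ks vk /(prefix_adj_new ks vk) /subsetP vx /(prefix_adj_new ks vk) /subsetP vy.
by apply: (prefix_adj_copy (ltnSn k) ks); [apply: vx | apply: vy]; rewrite !inE eqxx orbT.
Qed.

(* If a vertex of the cycle is new in the last copy, its two cycle-neighbours lie in that
   copy and are joined; otherwise the whole cycle already lives in the previous prefix. *)
Lemma prefix_four_cycle_chord k a z1 b z2 : k <= size Hs -> a != b -> z1 != z2 ->
  prefix_adj k a z1 -> prefix_adj k z1 b -> prefix_adj k b z2 -> prefix_adj k z2 a ->
  prefix_adj k a b || prefix_adj k z1 z2.
Proof.
elim: k => [|k IH] ks ab z12 az1 z1b bz2 z2a; first by move: az1; rewrite /prefix_adj take0 andbF.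
have chord := prefix_adj_new_chord ks.
case: (boolP (a \in prefix_verts k)) => ak; first last.
  by rewrite (chord a z1 z2) ?orbT // prefix_adj_sym.
case: (boolP (b \in prefix_verts k)) => bk; first last.
  by rewrite (chord b z1 z2) ?orbT // prefix_adj_sym.
case: (boolP (z1 \in prefix_verts k)) => z1k; first last.
  by rewrite (chord z1 a b) // prefix_adj_sym.
case: (boolP (z2 \in prefix_verts k)) => z2k; first last.
  by rewrite (chord z2 a b) // prefix_adj_sym.
have old := prefix_adj_old ks.
have := IH (ltnW ks) ab z12 (old _ _ ak z1k az1) (old _ _ z1k bk z1b)
  (old _ _ bk z2k bz2) (old _ _ z2k ak z2a).
by case/orP => adj; rewrite !prefix_adjS // adj ?orbT.
Qed.

Lemma tadj_sym u v : tadj u v = tadj v u.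
Proof. by rewrite setUC. Qed.

Lemma tadj_prefix_adj u v : tadj u v = prefix_adj (size Hs) u v.
Proof. by rewrite inE cards2 /prefix_adj take_size; case: (u != v). Qed.

Lemma tadj_neq u v : tadj u v -> u != v.
Proof. by rewrite tadj_prefix_adj => /andP []. Qed.

Lemma tadj_Tverts u v : tadj u v -> u \in Tverts Hs.
Proof. by rewrite tadj_prefix_adj => /prefix_adj_verts; rewrite /prefix_verts take_size. Qed.

Lemma tadj_copy i u v : i < size Hs -> u \in H i -> v \in H i -> u != v -> tadj u v.
Proof. by move=> iS ui vi uv; rewrite tadj_prefix_adj (prefix_adj_copy iS). Qed.

Lemma Tclique_sub_copy K : Tclique K -> 2 < #|K| -> exists2 i, i < size Hs & K \subset H i.
Proof.
move=> cliqueK cK; apply: prefix_clique_sub_copy => // u v uK vK uv.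
by rewrite -tadj_prefix_adj cliqueK.
Qed.

Lemma four_cycle_chord a z1 b z2 : a != b -> z1 != z2 ->
  tadj a z1 -> tadj z1 b -> tadj b z2 -> tadj z2 a -> tadj a b || tadj z1 z2.
Proof. rewrite !tadj_prefix_adj; exact: prefix_four_cycle_chord. Qed.

Lemma Tclique_setU1 a C : Tclique C -> {in C, forall c, tadj a c} -> Tclique (a |: C).
Proof.
move=> cliqueC aC u v /setU1P [-> | uC] /setU1P [-> | vC]; rewrite ?eqxx // => uv.
- exact: aC.
- by rewrite tadj_sym aC.
- exact: cliqueC.
Qed.

Lemma copy_uniq i j (K : {set V}) : i < size Hs -> j < size Hs -> 2 < #|K| ->
  K \subset H i -> K \subset H j -> i = j.
Proof.
move=> iS jS cK Ki Kj; apply/eqP; apply: contraTT cK => ij; rewrite -leqNgt.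
by apply: leq_trans (card_copyI iS jS ij); rewrite subset_leq_card // subsetI Ki.
Qed.

Lemma Tclique_copy i (K : {set V}) : i < size Hs -> K \subset H i -> Tclique K.
Proof. by move=> iS /subsetP Ki u v uK vK; apply: (tadj_copy iS); apply: Ki. Qed.

(* [v |: K] is a clique, so it lies in a copy, which must be the unique copy containing [K]. *)
Lemma mem_copy_of_apex i v (K : {set V}) : i < size Hs -> 2 < #|K| -> K \subset H i ->
  {in K, forall c, tadj v c} -> v \in H i.
Proof.
move=> iS cK Ki vK.
have cvK : 2 < #|v |: K| by rewrite (leq_trans cK) // subset_leq_card // subsetUr.
have [j jS vKj] := Tclique_sub_copy (Tclique_setU1 (Tclique_copy iS Ki) vK) cvK.
rewrite (copy_uniq iS jS cK Ki (subset_trans (subsetUr _ _) vKj)).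
by apply: (subsetP vKj); rewrite setU11.
Qed.

Lemma tadj_apexes a b (C : {set V}) : Tclique C -> 2 < #|C| -> a != b ->
  {in C, forall c, tadj a c} -> {in C, forall c, tadj b c} -> tadj a b.
Proof.
move=> cliqueC cC ab aC bC; have [i iS Ci] := Tclique_sub_copy cliqueC cC.
by rewrite (tadj_copy iS) // (mem_copy_of_apex iS cC Ci).
Qed.

Lemma Tclique_triangle x y z : tadj x y -> tadj y z -> tadj x z -> Tclique [set x; y; z].
Proof.
move=> xy yz xz u v; rewrite !in_setU !in_set1 -!orbA => /or3P [] /eqP -> /or3P [] /eqP ->;
  by rewrite ?eqxx // => _; rewrite // tadj_sym.
Qed.

Lemma card_triangle x y z : tadj x y -> tadj y z -> tadj x z -> 2 < #|[set x; y; z]|.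
Proof.
move=> xy yz xz; apply/card_gt2P; exists x, y, z; split; first by rewrite !inE !eqxx /= ?orbT.
by rewrite (tadj_neq xy) (tadj_neq yz) (eq_sym z) (tadj_neq xz).
Qed.

Lemma triangle_sub_copy x y z : tadj x y -> tadj y z -> tadj x z ->
  exists2 i, i < size Hs & [set x; y; z] \subset H i.
Proof.
by move=> xy yz xz; apply: Tclique_sub_copy (Tclique_triangle xy yz xz) (card_triangle xy yz xz).
Qed.

Lemma tadj_triangle_apexes a b x y z : a != b ->
  tadj x y -> tadj y z -> tadj x z -> {in [set x; y; z], forall c, tadj a c && tadj b c} ->
  tadj a b.
Proof.
move=> ab xy yz xz abC.
apply: (tadj_apexes (Tclique_triangle xy yz xz) (card_triangle xy yz xz) ab).
- by move=> c /abC /andP [].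
- by move=> c /abC /andP [].
Qed.
End KrTree.

Definition infected_nbrs (V : finType) (Hs : seq {set V}) (A : {set V}) (y : V) :=
  [set w in A | [set y; w] \in Tedges Hs].

Lemma card_infected_nbrs_lt (V : finType) r (Hs : seq {set V}) (A : {set V}) y :
  (~ exists v, bp_step r Hs A v) -> y \in Tverts Hs -> y \notin A ->
  #|infected_nbrs Hs A y| < r - 2.
Proof.
by move=> term yT yA; rewrite ltnNge; apply/negP => big; apply: term; exists y; left.
Qed.

Section CompletedCopy.
Variables (V : finType) (r : nat) (Hs : seq {set V}) (VG A X : {set V}) (a b : V).
Hypotheses (r5 : 5 <= r) (tree : Kr_tree r Hs).
Hypothesis seedA : VG :&: Tverts Hs \subset A.
Hypothesis terminal : ~ exists v, bp_step r Hs A v.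
Hypotheses (XW : X \subset VG :|: Tverts Hs) (cardX : #|X| = r).
Hypotheses (aX : a \in X) (bX : b \in X) (ab : a != b) (nab : [set a; b] \notin Tedges Hs).
Hypothesis tadj_outB : forall p q, p \in X -> q \in X -> p != q -> [set p; q] != [set a; b] ->
  p \notin VG :|: A -> [set p; q] \in Tedges Hs.

Local Notation B := (VG :|: A).
Local Notation H i := (nth set0 Hs i).
Local Notation tadj u v := ([set u; v] \in Tedges Hs).
Local Notation nbrs := (infected_nbrs Hs A).

Lemma tadj_in_X p q : p \in X -> q \in X -> p != q ->
  (p \notin [set a; b]) || (q \notin [set a; b]) -> (p \notin B) || (q \notin B) -> tadj p q.
Proof.
move=> pX qX pq pq_ab pqB.
have ne : [set p; q] != [set a; b].
  by apply: contraTneq pq_ab => <-; rewrite !inE !eqxx ?orbT.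
case/orP: pqB => [pB | qB]; first exact: tadj_outB.
by rewrite tadj_sym tadj_outB // 1?setUC // eq_sym.
Qed.

Lemma outB_Tverts y : y \in X -> y \notin B -> y \in Tverts Hs.
Proof. by move=> /(subsetP XW); rewrite !inE negb_or => /orP [-> | //] /andP []. Qed.

Lemma mem_infected_nbrs y z : y \in X -> y \notin B -> z \in X -> z \in B ->
  (y \notin [set a; b]) || (z \notin [set a; b]) -> z \in nbrs y.
Proof.
move=> yX yB zX zB yz_ab; have yz_neq : y != z by apply: contraNneq yB => ->.
have yz := tadj_in_X yX zX yz_neq yz_ab (introT orP (or_introl yB)).
rewrite inE yz andbT; case/setUP: zB => // zG.
by apply: (subsetP seedA); rewrite inE zG (@tadj_Tverts _ _ z y) // tadj_sym.
Qed.

Lemma card_infected_nbrs_outB y : y \in X -> y \notin B -> #|nbrs y| < r - 2.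
Proof.
move=> yX yB; apply: card_infected_nbrs_lt => //; first exact: outB_Tverts.
by apply: contra yB => /(subsetP (subsetUr VG A)).
Qed.

Local Notation Y := (X :\: B).
Local Notation Z := (X :&: B).

Lemma card_X_off_ab : #|X :\: [set a; b]| = r - 2.
Proof. by rewrite cardsD cardX (setIidPr _) ?cards2 ?ab //; apply/subsetP => w /set2P [] ->. Qed.

Lemma mem_Y_off_ab c : c \in Y :\: [set a; b] -> [/\ c \in X, c \notin B & c \notin [set a; b]].
Proof. by case/setDP => /setDP []. Qed.

Lemma tadj_ab_off p w : p \in [set a; b] -> w \in X -> w \notin [set a; b] ->
  (p \notin B) || (w \notin B) -> tadj p w.
Proof.
move=> pab wX wab pwB; have pX : p \in X by case/set2P: pab => ->.
by apply: tadj_in_X; rewrite ?wab ?orbT //; apply: contraNneq wab => <-.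
Qed.

(* Otherwise [a] and [b] would both be joined in T to three pairwise joined vertices. *)
Lemma card_Y_off_ab : #|Y :\: [set a; b]| <= 2.
Proof.
rewrite leqNgt; apply: contraNN nab => cC.
have apex p c : p \in [set a; b] -> c \in Y :\: [set a; b] -> tadj p c.
  by move=> pab /mem_Y_off_ab [cX cB cab]; rewrite tadj_ab_off ?cB ?orbT.
apply: (tadj_apexes tree _ cC ab).
- move=> u v uC /mem_Y_off_ab [vX vB vab] uv.
  have [uX uB uab] := mem_Y_off_ab uC.
  by apply: tadj_in_X; rewrite ?uab ?uB.
- by move=> c; apply: apex; rewrite set21.
- by move=> c; apply: apex; rewrite set22.
Qed.

Section NotInB.
Hypothesis XnB : ~~ (X \subset B).

(* Otherwise an endpoint of [a b] outside [B] would have all of [X :\: [set a; b]] as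
   infected neighbours. *)
Lemma Y_off_ab_nonempty : exists y, y \in Y :\: [set a; b].
Proof.
have [x xX xB] := subsetPn XnB; apply/set0Pn.
case: (boolP (x \in [set a; b])) => xab; last by apply/set0Pn; exists x; rewrite !in_setD xab xB.
apply: contraTneq (card_infected_nbrs_outB xX xB) => Y0; rewrite -leqNgt -card_X_off_ab.
apply/subset_leq_card/subsetP => w /setDP [wX wab]; apply: mem_infected_nbrs => //.
  by apply: contraT => wB; rewrite -(in_set0 w) -Y0 !in_setD wab wB.
by rewrite wab orbT.
Qed.

Lemma card_Z : #|Z| < r - 2.
Proof.
have [y /mem_Y_off_ab [yX yB yab]] := Y_off_ab_nonempty.
apply: leq_ltn_trans (card_infected_nbrs_outB yX yB).
apply/subset_leq_card/subsetP => z /setIP [zX zB].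
by apply: mem_infected_nbrs; rewrite ?yab.
Qed.

Lemma card_Y : 2 < #|Y|.
Proof. by have := cardsID B X; have := card_Z; rewrite cardX => cZ cXB; clear -r5 cZ cXB; lia. Qed.

Lemma ab_inB_contra : a \in B -> b \in B -> False.
Proof.
move=> aB bB; have := card_Y_off_ab; rewrite leqNgt.
suff -> : Y :\: [set a; b] = Y by rewrite card_Y.
apply/setDidPl; rewrite disjoint_subset; apply/subsetP => w /setDP [_ wB].
by rewrite !inE; apply: contra wB => /orP [] /eqP ->.
Qed.

Lemma card_Y_off_ab_outB : a \notin B -> b \notin B -> #|Y :\: [set a; b]| <= 1.
Proof.
move=> aB bB; rewrite leqNgt; apply: contraNN nab.
case/card_gt1P => y1 [y2 [/mem_Y_off_ab [y1X y1B y1ab] /mem_Y_off_ab [y2X y2B y2ab] y12]].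
have [c cX] : exists2 c, c \in X & c \notin [set a; b; y1; y2].
  apply/subsetPn; apply: contraTN r5 => /subset_leq_card; rewrite cardX -ltnNge ltnS => le4.
  exact: leq_trans le4 (card_set4_le _ _ _ _).
rewrite !in_setU !in_set1 !negb_or => /andP [/andP [/andP [ca cb] cy1] cy2].
have cab : c \notin [set a; b] by rewrite !inE negb_or ca cb.
apply: (tadj_triangle_apexes tree ab (x := y1) (y := y2) (z := c)).
- by apply: tadj_in_X; rewrite ?y1ab ?y1B.
- by apply: tadj_in_X; rewrite 1?eq_sym ?y2ab ?y2B.
- by apply: tadj_in_X; rewrite 1?eq_sym ?y1ab ?y1B.
- move=> w; rewrite !in_setU !in_set1 -!orbA => /or3P [] /eqP ->;
    by rewrite !tadj_ab_off ?set21 ?set22 ?aB ?bB.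
Qed.

(* With [#|Y| = 3], [a] and [b] see two vertices [z1], [z2] of [Z]; chordality forces
   [z1 z2] into T, and the triangle [y z1 z2] then joins [a] to [b]. *)
Lemma ab_outB_contra : a \notin B -> b \notin B -> False.
Proof.
move=> aB bB; have [y /mem_Y_off_ab [yX yB yab]] := Y_off_ab_nonempty.
have : 1 < #|Z|.
  have := cardsID [set a; b] Y; have := card_Y_off_ab_outB aB bB.
  have := subset_leq_card (subsetIr Y [set a; b]); rewrite cards2 ab.
  have := cardsID B X; rewrite cardX => cXB cYab cYoff cYID.
  by clear -r5 cXB cYab cYoff cYID; lia.
case/card_gt1P => z1 [z2 [/setIP [z1X z1B] /setIP [z2X z2B] z12]].
have offB z : z \in B -> z \notin [set a; b] by move=> zB; apply: contraL zB => /set2P [] ->.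
have apex p z : p \in [set a; b] -> z \in X -> z \in B -> tadj p z.
  by move=> pab zX zB; rewrite tadj_ab_off ?offB //; case/set2P: pab => ->; rewrite ?aB ?bB.
have az1 := apex a z1 (set21 a b) z1X z1B; have az2 := apex a z2 (set21 a b) z2X z2B.
have bz1 := apex b z1 (set22 a b) z1X z1B; have bz2 := apex b z2 (set22 a b) z2X z2B.
rewrite tadj_sym in bz1; rewrite tadj_sym in az2.
have /orP [] := four_cycle_chord tree ab z12 az1 bz1 bz2 az2; first exact/negP.
move=> z1z2; apply: (negP nab); apply: (tadj_triangle_apexes tree ab (x := y) (y := z1) (z := z2)).
- by apply: tadj_in_X; rewrite ?yab ?yB //; apply: contraNneq yB => ->.
- exact: z1z2.
- by apply: tadj_in_X; rewrite ?yab ?yB //; apply: contraNneq yB => ->.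
- move=> w; rewrite !in_setU !in_set1 -!orbA => /or3P [] /eqP ->;
    by rewrite !tadj_ab_off ?set21 ?set22 ?(offB z1) ?(offB z2) ?aB ?bB.
Qed.

Section SpecialStep.
Hypotheses (aB : a \notin B) (bB : b \in B).
Variables y1 y2 : V.
Hypotheses (y1C : y1 \in Y :\: [set a; b]) (y2C : y2 \in Y :\: [set a; b]) (y12 : y1 != y2).
Hypothesis cardZ : #|Z| = r - 3.

Lemma Z_sub_infected_nbrs : Z \subset nbrs y1.
Proof.
have [y1X y1B y1ab] := mem_Y_off_ab y1C.
by apply/subsetP => z /setIP [zX zB]; apply: mem_infected_nbrs; rewrite ?y1ab.
Qed.

Lemma infected_nbr_in_Z h : h \in A -> tadj y1 h -> h \in Z.
Proof.
move=> hA y1h; have [y1X y1B _] := mem_Y_off_ab y1C.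
apply: contraTT (card_infected_nbrs_outB y1X y1B) => hZ; rewrite -leqNgt.
have -> : r - 2 = #|h |: Z| by rewrite cardsU1 hZ cardZ add1n subnSK // (leq_trans _ r5).
by apply/subset_leq_card; rewrite subUset sub1set inE hA y1h Z_sub_infected_nbrs.
Qed.

Lemma Z_sub_A : Z \subset A.
Proof.
by apply: subset_trans Z_sub_infected_nbrs _; apply/subsetP => w; rewrite inE => /andP [].
Qed.

Lemma tadj_y1y2 : tadj y1 y2.
Proof.
have [y1X y1B y1ab] := mem_Y_off_ab y1C; have [y2X _ _] := mem_Y_off_ab y2C.
by apply: tadj_in_X; rewrite ?y1ab ?y1B.
Qed.

Lemma tadj_ab_y p y : p \in [set a; b] -> y \in [set y1; y2] -> tadj p y.
Proof.
move=> pab /set2P [] ->.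
- by have [yX yB yab] := mem_Y_off_ab y1C; rewrite tadj_ab_off ?yB ?orbT.
- by have [yX yB yab] := mem_Y_off_ab y2C; rewrite tadj_ab_off ?yB ?orbT.
Qed.

Lemma copy_of_a_y1y2 :
  exists i, [/\ i < size Hs, [set y1; y2] \subset H i, b \notin H i & H i :&: A = Z :\ b].
Proof.
have ay1 := tadj_ab_y (set21 a b) (set21 y1 y2); have ay2 := tadj_ab_y (set21 a b) (set22 y1 y2).
have [i iS K_i] := triangle_sub_copy tree ay1 tadj_y1y2 ay2.
have inK_i w : w \in [set a; y1; y2] -> w \in H i by apply: (subsetP K_i).
have bi : b \notin H i.
  by apply: contraNN nab => bi; apply: (tadj_copy iS) => //; apply: inK_i; rewrite !inE eqxx.
exists i; split => //.
  by apply/subsetP => w /set2P [] ->; rewrite inK_i // !inE eqxx ?orbT.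
have [y1X y1B _] := mem_Y_off_ab y1C.
apply/eqP; rewrite eqEsubset; apply/andP; split; apply/subsetP => h.
  case/setIP => hi hA; have hB : h \in B by rewrite inE hA orbT.
  have y1h : tadj y1 h.
    apply: (tadj_copy iS) => //; first by apply: inK_i; rewrite !inE eqxx orbT.
    by apply: contraNneq y1B => ->.
  by rewrite in_setD1 infected_nbr_in_Z // andbT; apply: contraNneq bi => <-.
case/setD1P => hb hZ; rewrite inE (subsetP Z_sub_A) // andbT.
have /setIP [hX hB] := hZ.
apply: (mem_copy_of_apex tree iS (card_triangle ay1 tadj_y1y2 ay2) K_i) => c.
have hab : h \notin [set a; b] by rewrite !inE negb_or hb andbT; apply: contraNneq aB => <-.
have [y2X y2B _] := mem_Y_off_ab y2C.
rewrite !in_setU !in_set1 -!orbA => /or3P [] /eqP ->.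
- by rewrite tadj_sym tadj_ab_off ?set21 ?aB.
- by apply: tadj_in_X; rewrite ?hab ?y1B ?orbT //; apply: contraNneq y1B => <-.
- by apply: tadj_in_X; rewrite ?hab ?y2B ?orbT //; apply: contraNneq y2B => <-.
Qed.

Lemma copy_of_y1y2_b i : i < size Hs -> [set y1; y2] \subset H i -> b \notin H i ->
  H i :&: A = Z :\ b ->
  exists j, [/\ j < size Hs, j != i, [set y1; y2] \subset H j & H j :&: A = [set b]].
Proof.
move=> iS /subsetP f_i bi HiA; have [y1X y1B _] := mem_Y_off_ab y1C.
have [y2X y2B _] := mem_Y_off_ab y2C.
have y1b : tadj y1 b by rewrite tadj_sym tadj_ab_y ?set22 ?set21.
have y2b : tadj y2 b by rewrite tadj_sym tadj_ab_y ?set22.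
have [j jS /subsetP K_j] := triangle_sub_copy tree tadj_y1y2 y2b y1b.
have y1j : y1 \in H j by apply: K_j; rewrite !inE eqxx.
have y2j : y2 \in H j by apply: K_j; rewrite !inE eqxx orbT.
have bj : b \in H j by apply: K_j; rewrite !inE eqxx orbT.
exists j; split => //; first by apply: contraNneq bi => <-.
  by apply/subsetP => w /set2P [] ->.
have bA : b \in A by apply: (subsetP Z_sub_A); apply/setIP.
apply/eqP; rewrite eqEsubset sub1set in_setI bj bA !andbT.
apply/subsetP => h /setIP [hj hA]; rewrite inE; apply: contraT => hb.
have yh y : y \in X -> y \notin B -> y \in H j -> tadj y h.
  by move=> yX yB yj; apply: (tadj_copy jS) => //; apply: contraNneq yB => ->; rewrite inE hA orbT.
have y1h := yh y1 y1X y1B y1j; have y2h := yh y2 y2X y2B y2j.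
have : h \in Z :\ b by rewrite in_setD1 hb infected_nbr_in_Z.
rewrite -HiA => /setIP [hi _].
have sub k : y1 \in H k -> y2 \in H k -> h \in H k -> [set y1; y2; h] \subset H k.
  by move=> ? ? ?; apply/subsetP => w; rewrite !inE -!orbA => /or3P [] /eqP ->.
have eij := copy_uniq tree iS jS (card_triangle tadj_y1y2 y2h y1h)
  (sub i (f_i y1 (set21 _ _)) (f_i y2 (set22 _ _)) hi)
  (sub j y1j y2j hj).
by rewrite eij bj in bi.
Qed.

(* The edge [y1 y2] lies in two copies: one meeting [A] in the [r - 4] vertices [Z :\ b],
   the other meeting it only in [b]. *)
Lemma special_step : bp_special r Hs A y1.
Proof.
have [i [iS f_i bi HiA]] := copy_of_a_y1y2.
have [j [jS /eqP ji f_j HjA]] := copy_of_y1y2_b iS f_i bi HiA.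
have bZ : b \in Z by apply/setIP.
have [_ y1B _] := mem_Y_off_ab y1C; have [_ y2B _] := mem_Y_off_ab y2C.
exists [set y1; y2], i, j; rewrite HiA HjA (setUC (Z :\ b)) setD1K //.
have ij : i <> j by move=> eij; apply: ji.
do !split => //; first by rewrite tadj_y1y2.
- by exists i, j.
- by move: (cardsD1 b Z); rewrite bZ cardZ add1n => /(congr1 predn) /= <-; rewrite -subn1 -subnDA.
- by rewrite cards1.
- rewrite disjoints_subset; apply/subsetP => w /setIP [_ wB]; rewrite in_setC.
  by apply: contraL wB => /set2P [] ->.
- exact: set21.
Qed.
End SpecialStep.
Lemma a_outB_b_inB_contra : a \notin B -> b \in B -> False.
Proof.
move=> aB bB; have Yab : #|Y :&: [set a; b]| <= 1.
  rewrite -(cards1 a) subset_leq_card //.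
  apply/subsetP => w /setIP [/setDP [_ wB] /set2P [-> | wb]]; first exact: set11.
  by rewrite wb bB in wB.
have := cardsID [set a; b] Y; have := card_Y_off_ab; have := card_Y; have := card_Z.
have := cardsID B X; rewrite cardX => cXBr cZ cY cYab cYID.
have [/card_gt1P [y1 [y2 [y1C y2C y12]]] cZ3] : 1 < #|Y :\: [set a; b]| /\ #|Z| = r - 3.
  by clear -Yab cXBr cZ cY cYab cYID; lia.
apply: terminal; exists y1; right; split; first by move=> [w uw]; apply: terminal; exists w; left.
exact: (special_step aB bB y1C y2C y12 cZ3).
Qed.
End NotInB.

Lemma completed_copy_sub_ordered : ~ (a \in B /\ b \notin B) -> X \subset B.
Proof.
move=> order; apply/negPn/negP => XnB.
case: (boolP (a \in B)) => aB; case: (boolP (b \in B)) => bB.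
- exact: ab_inB_contra XnB aB bB.
- by case: order.
- exact: a_outB_b_inB_contra XnB aB bB.
- exact: ab_outB_contra XnB aB bB.
Qed.
End CompletedCopy.

Definition explained_edges (V : finType) (EG : {set {set V}}) (Hs : seq {set V})
    (B : {set V}) (E : {set {set V}}) :=
  forall f, f \in E -> [\/ f \in EG, f \in Tedges Hs | f \subset B].

Section Dynamics.
Variables (V : finType) (r : nat) (Hs : seq {set V}) (VG A : {set V}) (EG : {set {set V}}).
Hypotheses (r5 : 5 <= r) (tree : Kr_tree r Hs) (graphG : is_graph VG EG).
Hypothesis seedA : VG :&: Tverts Hs \subset A.
Hypothesis terminal : ~ exists v, bp_step r Hs A v.

Local Notation B := (VG :|: A).

Lemma completes_sub (E : {set {set V}}) (e X : {set V}) :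
  Tedges Hs \subset E -> explained_edges EG Hs B E ->
  dyn_completes r (VG :|: Tverts Hs) E e X -> X \subset B.
Proof.
move=> TE explE [XW cardX eX eE fE].
move: eX; rewrite inE => /andP [/cards2P [a [b [ab e_ab]]] /subsetP abX]; subst e.
have aX : a \in X by rewrite abX ?set21.
have bX : b \in X by rewrite abX ?set22.
have nab : [set a; b] \notin Tedges Hs by apply: contra eE; apply: (subsetP TE).
have tadj_outB p q : p \in X -> q \in X -> p != q -> [set p; q] != [set a; b] ->
    p \notin B -> [set p; q] \in Tedges Hs.
  move=> pX qX pq pq_ab pB.
  have pqX : [set p; q] \in pairs_in X.
    by rewrite inE cards2 pq; apply/subsetP => w /set2P [] ->.
  case: (explE _ (fE _ pqX pq_ab)) => [/graphG [_ /subsetP pqG] | // | /subsetP pqB].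
  - by move: pB; rewrite inE (pqG p (set21 p q)).
  - by move: pB; rewrite (pqB p (set21 p q)).
have ordered p q : [set p; q] = [set a; b] -> p \in X -> q \in X -> p != q ->
    ~ (p \in B /\ q \notin B) -> X \subset B.
  move=> pq_ab pX qX pq; rewrite -pq_ab in nab tadj_outB.
  exact: (completed_copy_sub_ordered r5 tree seedA terminal XW cardX pX qX pq nab tadj_outB).
case: (boolP ((a \in B) && (b \notin B))) => [/andP [aB bB] | order].
  apply: (ordered b a) => //; first exact: setUC.
    by rewrite eq_sym.
  by case=> _; rewrite aB.
by apply: (ordered a b) => // -[aB bB]; rewrite aB bB in order.
Qed.

Lemma dyn_path_explained (E : {set {set V}}) es : Tedges Hs \subset E ->
  explained_edges EG Hs B E -> dyn_path r (VG :|: Tverts Hs) E es ->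
  explained_edges EG Hs B (E :|: [set x in es]).
Proof.
elim: es E => [|e es IH] E TE explE /=; first by move=> _ f; rewrite inE in_set0 orbF => /explE.
case=> [[X compX] path].
have -> : E :|: [set x in e :: es] = (e |: E) :|: [set x in es].
  by apply/setP => f; rewrite !inE orbA [(f == e) || _]orbC.
apply: IH path; first by rewrite (subset_trans TE) // subsetUr.
move=> f /setU1P [-> | /explE //]; constructor 3.
have [_ _ eX _ _] := compX; move: eX; rewrite inE => /andP [_ /subset_trans]; apply.
exact: completes_sub compX.
Qed.
End Dynamics.

Unset Implicit Arguments.

Theorem corollary6p4 (V : finType) (r : nat) (Hs : seq {set V})
    (VG : {set V}) (EG : {set {set V}}) :
  5 <= r -> Kr_tree r Hs -> is_graph VG EG ->
  forall A : {set V}, bp_run r Hs (VG :&: Tverts Hs) A ->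
  forall X : {set V},
    completed_copy r (VG :|: Tverts Hs) (EG :|: Tedges Hs) X ->
    X \subset VG :|: A.
Proof.
move=> r5 tree graphG A [vs [_ defA terminal]] X [es [e [path compX]]].
have seedA : VG :&: Tverts Hs \subset A by rewrite defA subsetUl.
have TE : Tedges Hs \subset EG :|: Tedges Hs := subsetUr _ _.
have expl0 : explained_edges EG Hs (VG :|: A) (EG :|: Tedges Hs).
  by move=> f /setUP [fG | fT]; [constructor 1 | constructor 2].
have explE := dyn_path_explained r5 tree graphG seedA terminal TE expl0 path.
apply: (completes_sub r5 tree graphG seedA terminal _ explE compX).
by rewrite (subset_trans TE) // subsetUl.
Qed.
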